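(* Let $F,\Gamma$ be convergence spaces, $R\subseteq F\times\Gamma$ a relation closed in the product convergence, and $A\subseteq R$. Let $H:\Gamma\to\Gamma$ be continuous, with $(f,H(\gamma))\in A$ for all $(f,\gamma)\in A$, and such that for all $f\in F,\gamma\in\Gamma$, $(f,H(\gamma))\in R$ implies $(f,\gamma)\in R$. Then for any $\gamma\in\Gamma$ the following cannot both be true: (i) for every $f\in F_{\overline A}$ with $(f,\gamma)\in R$, we have $(f,\gamma)\in\overline A$; (ii) there exists $f\in F_{\overline A}$ such that exactly one of $(f,\gamma)\in R$ and $(f,H(\gamma))\in R$ holds.
   Context: A convergence space is a set with a relation $(x_i)\to x$ between nets and points such that constant nets converge to their value, subnets of a convergent net converge to the same limit (where $(y_j)$ is a subnet of $(x_i)$ if for each $i_0$ there is $j_0$ with $\{y_j\}_{j\ge j_0}\subseteq\{x_i\}_{i\ge i_0}$), and if $(x_i)_{i\in I}\to x$, $(y_i)_{i\in I}\to x$, $z_i\in\{x_i,y_i\}$ then $(z_i)\to x$. Product convergence: componentwise. $\overline B$ is the set of limits of nets in $B$; $B$ closed if $\overline B=B$. $H$ continuous: $(\gamma_i)\to\gamma$ implies $(H(\gamma_i))\to H(\gamma)$ for all $\gamma$. $F_B=\{f\in F:\exists\gamma,\ (f,\gamma)\in B\}$. *)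

Set Implicit Arguments.

Record directed := Directed {
  dcar :> Type;
  dle : dcar -> dcar -> Prop;
  dle_refl : forall i, dle i i;
  dle_trans : forall i j k, dle i j -> dle j k -> dle i k;
  dle_up : forall i j, exists k, dle i k /\ dle j k;
  dinh : inhabited dcar
}.

Arguments dle {d} _ _.
Definition subnet {X : Type} {I J : directed} (y : J -> X) (x : I -> X) : Prop :=
  forall i0 : I, exists j0 : J, forall j : J, dle j0 j ->
    exists i : I, dle i0 i /\ y j = x i.

Record convSpace := ConvSpace {
  cs_car :> Type;
  conv : forall D : directed, (D -> cs_car) -> cs_car -> Prop;
  conv_const : forall (D : directed) (x : cs_car), conv D (fun _ => x) x;
  conv_subnet : forall (I J : directed) (x : I -> cs_car) (y : J -> cs_car) (l : cs_car),
      conv I x l -> subnet y x -> conv J y l;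
  conv_mix : forall (I : directed) (x y z : I -> cs_car) (l : cs_car),
      conv I x l -> conv I y l -> (forall i, z i = x i \/ z i = y i) -> conv I z l
}.

Definition prod_conv (X Y : convSpace) (D : directed) (z : D -> X * Y) (p : X * Y) : Prop :=
  conv X D (fun i => fst (z i)) (fst p) /\ conv Y D (fun i => snd (z i)) (snd p).

Definition pclosure (X Y : convSpace) (B : X * Y -> Prop) (p : X * Y) : Prop :=
  exists (D : directed) (z : D -> X * Y), (forall i, B (z i)) /\ prod_conv X Y D z p.

Definition pclosed (X Y : convSpace) (B : X * Y -> Prop) : Prop :=
  forall p, pclosure X Y B p <-> B p.

Definition continuous (X Y : convSpace) (H : X -> Y) : Prop :=
  forall (D : directed) (x : D -> X) (l : X), conv X D x l -> conv Y D (fun i => H (x i)) (H l).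

Definition proj1set {X Y : Type} (B : X * Y -> Prop) (f : X) : Prop :=
  exists g : Y, B (f, g).

Set Implicit Arguments.
Unset Strict Implicit.

(* Under (i), for every f in F_{cl A}: R(f, g) puts (f, g) in cl A, hence (f, H g)
   in cl A (H is continuous and preserves A), hence in R since R is closed;
   conversely R(f, H g) gives R(f, g) by hypothesis. So R(f, g) <-> R(f, H g),
   which is exactly the negation of (ii). *)

Lemma pclosure_mono (X Y : convSpace) (B C : X * Y -> Prop) (p : X * Y) :
  (forall q, B q -> C q) -> pclosure X Y B p -> pclosure X Y C p.
Proof.
  intros HBC [D [z [Hz Hconv]]].
  exists D, z. split; [intros i; apply HBC, Hz | exact Hconv].
Qed.

Lemma pclosure_sub_closed (X Y : convSpace) (B C : X * Y -> Prop) (p : X * Y) :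
  pclosed X Y C -> (forall q, B q -> C q) -> pclosure X Y B p -> C p.
Proof.
  intros HC HBC Hp. apply HC. exact (pclosure_mono HBC Hp).
Qed.

Lemma pclosure_map_snd (X Y : convSpace) (H : Y -> Y) (B : X * Y -> Prop)
    (x : X) (y : Y) :
  continuous Y Y H -> (forall a b, B (a, b) -> B (a, H b)) ->
  pclosure X Y B (x, y) -> pclosure X Y B (x, H y).
Proof.
  intros Hcont HB [D [z [Hz [Hfst Hsnd]]]].
  exists D, (fun i => (fst (z i), H (snd (z i)))). split.
  - intros i. apply HB. rewrite <- surjective_pairing. apply Hz.
  - split; [exact Hfst | exact (Hcont _ _ _ Hsnd)].
Qed.

Section Corollary.

Variables (F G : convSpace) (R A : F * G -> Prop) (H : G -> G).
Hypothesis HRclosed : pclosed F G R.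
Hypothesis HAR : forall p, A p -> R p.
Hypothesis Hcont : continuous G G H.
Hypothesis HA : forall f g, A (f, g) -> A (f, H g).
Hypothesis HR : forall f g, R (f, H g) -> R (f, g).

Lemma R_iff_R_H (g : G) (f : F) :
  (R (f, g) -> pclosure F G A (f, g)) -> (R (f, g) <-> R (f, H g)).
Proof.
  intros Hcl. split.
  - intros Hfg. apply (pclosure_sub_closed HRclosed HAR).
    exact (pclosure_map_snd Hcont HA (Hcl Hfg)).
  - apply HR.
Qed.

End Corollary.

Theorem corollary3p3 (F G : convSpace) (R A : F * G -> Prop)
  (HRclosed : pclosed F G R)
  (HAR : forall p, A p -> R p)
  (H : G -> G) (Hcont : continuous G G H)
  (HA : forall (f : F) (g : G), A (f, g) -> A (f, H g))
  (HR : forall (f : F) (g : G), R (f, H g) -> R (f, g))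
  (g : G) :
  ~ ( (forall f : F, proj1set (pclosure F G A) f -> R (f, g) -> pclosure F G A (f, g))
      /\ (exists f : F, proj1set (pclosure F G A) f /\
            ((R (f, g) /\ ~ R (f, H g)) \/ (~ R (f, g) /\ R (f, H g))))).
Proof.
  intros [Hi [f [Hf Hxor]]].
  pose proof (R_iff_R_H HRclosed HAR Hcont HA HR (Hi f Hf)) as Hiff.
  destruct Hxor as [[H1 H2] | [H1 H2]]; tauto.
Qed.
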